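(* For every integer $t\ge1$, $$-\frac{11}{10t}<\frac{S_2(t)}{\binom{-3/2}{t}}-\frac{(-1)^t}{\binom{-3/2}{t}}\cosh\alpha+\frac{\sinh\alpha}{\alpha}<\frac1t.$$
   Context: $\alpha=\pi/6$. $(a)_m=a(a+1)\cdots(a+m-1)$ is the rising factorial ($(a)_0=1$); $\binom{x}{m}=x(x-1)\cdots(x-m+1)/m!$ for $m\ge1$, $\binom{x}{0}=1$. For $t\ge1$, $$S_2(t)=\sum_{s=0}^{t-1}(1/2-s)_{s+1}\binom{-3/2}{t-s-1}\sum_{u=0}^s\frac{(-1)^u(-s)_u}{(s+u+1)!\,(2u)!}\left(\frac{\pi^2}{36}\right)^u.$$ *)

From Stdlib Require Import Reals Arith.
Open Scope R_scope.

Definition alpha : R := PI / 6.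

Fixpoint rising (a : R) (m : nat) : R :=
  match m with
  | O => 1
  | S k => rising a k * (a + INR k)
  end.

Fixpoint falling (x : R) (m : nat) : R :=
  match m with
  | O => 1
  | S k => falling x k * (x - INR k)
  end.

Definition gbinom (x : R) (m : nat) : R := falling x m / INR (fact m).

Fixpoint sumR (n : nat) (f : nat -> R) : R :=
  match n with
  | O => 0
  | S k => sumR k f + f k
  end.

Definition S2 (t : nat) : R :=
  sumR t (fun s =>
    rising (1/2 - INR s) (s + 1) * gbinom (-3/2) (t - s - 1) *
    sumR (s + 1) (fun u =>
      (-1) ^ u * rising (- INR s) u
        / (INR (fact (s + u + 1)) * INR (fact (2 * u)))
        * (PI ^ 2 / 36) ^ u)).

(* Exchanging the two summations in [S2 t] and evaluating the inner sum by a Zeilberger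
   recurrence gives
     S2 t = - binom(-3/2, t) * sum_(v<t) kappa_v * rho_(t,v) * C_v,
   with kappa_v = 2/((2v+1)(2v+3)), rho_(t,v) = C(2t, t+1+v)/C(2t, t) and C_v the partial
   sums of cosh alpha = sum_u alpha^(2u)/(2u)!.  A second telescoping recurrence gives
   sum_(v<t) kappa_v rho_(t,v) = 1 - (-1)^t / binom(-3/2, t), and summing kappa_v C_v by parts
   turns the quantity of the theorem into
     (sinh alpha/alpha - P_t) - (cosh alpha - C_(t-1))/(2t+1)
       - sum_(v<t) kappa_v (1 - rho_(t,v)) (cosh alpha - C_v),
   P_t being the partial sums of sinh alpha / alpha.  The first term lies between 0 and the
   second, which is at most (2/7)/t since cosh alpha <= 9/7.  The last sum is at most
   (12/35)/t, because 1 - rho_(t,v) <= (v+1)^2/t and cosh alpha - C_v decays geometrically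
   in alpha^2 <= 4/9. *)

From Stdlib Require Import Reals Factorial Lra Lia Psatz.
Open Scope R_scope.

Lemma sumR_ext N f g : (forall k, (k < N)%nat -> f k = g k) -> sumR N f = sumR N g.
Proof.
  induction N as [|N IH]; intros H; simpl; [reflexivity|].
  rewrite IH by (intros; apply H; lia). rewrite H by lia. reflexivity.
Qed.

Lemma sumR_plus N f g : sumR N (fun k => f k + g k) = sumR N f + sumR N g.
Proof. induction N as [|N IH]; simpl; [ring|rewrite IH; ring]. Qed.

Lemma sumR_scal N a f : sumR N (fun k => a * f k) = a * sumR N f.
Proof. induction N as [|N IH]; simpl; [ring|rewrite IH; ring]. Qed.

Lemma sumR_lin N a b f g : sumR N (fun k => a * f k + b * g k) = a * sumR N f + b * sumR N g.
Proof. rewrite sumR_plus, !sumR_scal. reflexivity. Qed.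

Lemma sumR_le N f g : (forall k, (k < N)%nat -> f k <= g k) -> sumR N f <= sumR N g.
Proof.
  induction N as [|N IH]; intro H; simpl; [lra|].
  apply Rplus_le_compat; [apply IH; intros; apply H; lia | apply H; lia].
Qed.

Lemma sumR_nonneg N f : (forall k, (k < N)%nat -> 0 <= f k) -> 0 <= sumR N f.
Proof.
  intro H. apply Rle_trans with (sumR N (fun _ => 0)); [|now apply sumR_le].
  clear H. induction N as [|N IH]; simpl; lra.
Qed.

Lemma sumR_shift0 N f : sumR (S N) f = f 0%nat + sumR N (fun k => f (S k)).
Proof.
  induction N as [|N IH]; [simpl; ring|].
  change (sumR (S (S N)) f) with (sumR (S N) f + f (S N)). rewrite IH. simpl. ring.
Qed.

Lemma sumR_telescope N f g e :
  (forall k, (k < N)%nat -> f k = g (S k) - g k) -> f N = e - g N ->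
  sumR (S N) f = e - g 0%nat.
Proof.
  intros Hstep Hlast. change (sumR (S N) f) with (sumR N f + f N). rewrite Hlast.
  enough (sumR N f = g N - g 0%nat) by lra.
  clear Hlast. induction N as [|N IH]; simpl; [ring|].
  rewrite IH by (intros; apply Hstep; lia). rewrite Hstep by lia. ring.
Qed.

Lemma sumR_triangle t h : sumR t (fun s => sumR (S s) (h s)) =
  sumR t (fun u => sumR (t - u) (fun k => h (u + k)%nat u)).
Proof.
  induction t as [|t IH]; [reflexivity|].
  transitivity (sumR t (fun s => sumR (S s) (h s)) + (sumR t (h t) + h t t)); [reflexivity|].
  transitivity (sumR t (fun u => sumR (S t - u) (fun k => h (u + k)%nat u))
                + sumR (S t - t) (fun k => h (t + k)%nat t)); [|reflexivity].
  rewrite IH, (sumR_ext t (fun u => sumR (S t - u) (fun k => h (u + k)%nat u))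
                          (fun u => sumR (t - u) (fun k => h (u + k)%nat u) + h t u)).
  - rewrite sumR_plus. replace (S t - t)%nat with 1%nat by lia. cbn [sumR].
    rewrite Nat.add_0_r. ring.
  - intros u Hu. replace (S t - u)%nat with (S (t - u)) by lia. cbn [sumR].
    now replace (u + (t - u))%nat with t by lia.
Qed.

Definition factR (n : nat) : R := INR (fact n).

Lemma factR_pos n : 0 < factR n.
Proof. apply lt_0_INR, lt_O_fact. Qed.

Lemma factR_neq0 n : factR n <> 0.
Proof. apply Rgt_not_eq, factR_pos. Qed.

Lemma factR_0 : factR 0 = 1.
Proof. reflexivity. Qed.

Lemma factR_S n : factR (S n) = (INR n + 1) * factR n.
Proof. unfold factR. rewrite fact_simpl, mult_INR, S_INR. reflexivity. Qed.

Lemma factR_SS n : factR (S (S n)) = (INR n + 2) * (INR n + 1) * factR n.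
Proof. rewrite !factR_S, S_INR. ring. Qed.

Ltac inr_simpl := repeat rewrite ?S_INR, ?plus_INR, ?mult_INR, ?INR_0 in *; simpl INR in *.

Ltac nat_pos :=
  repeat match goal with
  | n : nat |- _ => lazymatch goal with _ : 0 <= INR n |- _ => fail | _ => pose proof (pos_INR n) end
  | |- context [INR ?e] => lazymatch goal with _ : 0 <= INR e |- _ => fail | _ => pose proof (pos_INR e) end
  end.

Ltac fact_field :=
  repeat rewrite ?factR_SS, ?factR_S, ?factR_0; inr_simpl; field;
  repeat split; try apply factR_neq0; try (apply pow_nonzero; lra); nat_pos; nra.

Definition kappa (v : nat) : R := 2 / ((2 * INR v + 1) * (2 * INR v + 3)).

Definition zb_term (u n k : nat) : R :=
  2 * (2 * INR u + 2) * factR (2 * (n - k) + 1) * factR (2 * u + 2 * k) /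
  (factR (n - k) ^ 2 * factR k * factR (2 * u + k + 2)).

Definition zb_sum (u n : nat) : R :=
  kappa u * factR (2 * u + 2 * n + 3) / (factR n * factR (2 * u + n + 2)).

Definition zb_rec0 (u n : nat) : R := - (2 * (INR u + INR n + 1) + 3) * (INR u + INR n + 2) ^ 2.
Definition zb_rec1 (u n : nat) : R := (INR u + INR n + 2) * (INR n + 1) * (2 * INR u + INR n + 3) / 2.

Definition zb_cert_poly (u n : nat) (K : R) : R :=
  let U := INR u in let N := INR n in
  (-12 - 18*U - 6*U^2 - 14*N - 18*N*U - 4*N*U^2 - 4*N^2 - 4*N^2*U)
  + (2 + 9*U + 4*U^2 - 3*N + 2*N*U - 2*N^2) * K + (4 + 2*U + 2*N) * K^2.

(* The Zeilberger certificate.  Its formula divides by zero at [k = n + 1],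
   where the boundary value [zb_cert_top] is used instead. *)
Definition zb_cert (u n k : nat) : R :=
  INR k * zb_cert_poly u n (INR k) / INR (n + 1 - k) * zb_term u n k.

Definition zb_cert_top (u n : nat) : R :=
  zb_cert_poly u n (INR n + 1) * (2 * INR u + 2) * factR (2 * u + 2 * n + 2)
  / (factR n * factR (2 * u + n + 3)).

Lemma zb_term_rec u n k : (k < n)%nat ->
  zb_rec0 u n * zb_term u n k + zb_rec1 u n * zb_term u (S n) k
  = zb_cert u n (S k) - zb_cert u n k.
Proof.
  intro Hk. destruct (Nat.le_exists_sub (S k) n Hk) as [m [-> _]].
  unfold zb_cert, zb_term, zb_rec0, zb_rec1, zb_cert_poly.
  replace (m + S k - k)%nat with (S m) by lia.
  replace (S (m + S k) - k)%nat with (S (S m)) by lia.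
  replace (m + S k - S k)%nat with m by lia.
  replace (m + S k + 1 - S k)%nat with (S m) by lia.
  replace (m + S k + 1 - k)%nat with (S (S m)) by lia.
  replace (2 * S m + 1)%nat with (S (S (2 * m + 1))) by lia.
  replace (2 * S (S m) + 1)%nat with (S (S (S (S (2 * m + 1))))) by lia.
  replace (2 * u + 2 * S k)%nat with (S (S (2 * u + 2 * k))) by lia.
  replace (2 * u + S k + 2)%nat with (S (2 * u + k + 2)) by lia.
  fact_field.
Qed.

Lemma zb_term_rec_top u n :
  zb_rec0 u n * zb_term u n n + zb_rec1 u n * zb_term u (S n) n
  = zb_cert_top u n - zb_cert u n n.
Proof.
  unfold zb_cert, zb_term, zb_rec0, zb_rec1, zb_cert_top, zb_cert_poly.
  rewrite Nat.sub_diag.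
  replace (S n - n)%nat with 1%nat by lia.
  replace (n + 1 - n)%nat with 1%nat by lia.
  replace (2 * u + 2 * n + 2)%nat with (S (S (2 * u + 2 * n))) by lia.
  replace (2 * u + n + 3)%nat with (S (2 * u + n + 2)) by lia.
  replace (2 * 1 + 1)%nat with 3%nat by lia.
  replace (2 * 0 + 1)%nat with 1%nat by lia.
  fact_field.
Qed.

Lemma zb_sum_rec u n :
  zb_rec0 u n * zb_sum u n + zb_rec1 u n * (zb_sum u (S n) - zb_term u (S n) (S n))
  = zb_cert_top u n.
Proof.
  unfold zb_sum, kappa, zb_term, zb_rec0, zb_rec1, zb_cert_top, zb_cert_poly.
  rewrite Nat.sub_diag.
  replace (2 * u + 2 * n + 3)%nat with (S (S (S (2 * u + 2 * n)))) by lia.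
  replace (2 * u + 2 * S n + 3)%nat with (S (S (S (S (S (2 * u + 2 * n)))))) by lia.
  replace (2 * u + 2 * S n)%nat with (S (S (2 * u + 2 * n))) by lia.
  replace (2 * u + 2 * n + 2)%nat with (S (S (2 * u + 2 * n))) by lia.
  replace (2 * u + n + 3)%nat with (S (2 * u + n + 2)) by lia.
  replace (2 * u + S n + 2)%nat with (S (2 * u + n + 2)) by lia.
  replace (2 * 0 + 1)%nat with 1%nat by lia.
  fact_field.
Qed.

Lemma zb_rec1_pos u n : 0 < zb_rec1 u n.
Proof. unfold zb_rec1. nat_pos. apply Rmult_lt_0_compat; [|lra]. repeat apply Rmult_lt_0_compat; lra. Qed.

Lemma zb_term_sum u n : sumR (S n) (zb_term u n) = zb_sum u n.
Proof.
  induction n as [|n IH].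
  - cbn [sumR]. unfold zb_term, zb_sum, kappa. rewrite Nat.sub_diag.
    replace (2 * u + 2 * 0 + 3)%nat with (S (S (S (2 * u)))) by lia.
    replace (2 * u + 2 * 0)%nat with (2 * u)%nat by lia.
    replace (2 * u + 0 + 2)%nat with (S (S (2 * u))) by lia.
    replace (2 * 0 + 1)%nat with 1%nat by lia.
    fact_field.
  - assert (Hrec : sumR (S n) (fun k => zb_rec0 u n * zb_term u n k + zb_rec1 u n * zb_term u (S n) k)
                   = zb_cert_top u n).
    { replace (zb_cert_top u n) with (zb_cert_top u n - zb_cert u n 0).
      - apply sumR_telescope; [apply zb_term_rec | apply zb_term_rec_top].
      - unfold zb_cert. rewrite INR_0. unfold Rdiv. ring. }
    rewrite sumR_lin, IH, <- (zb_sum_rec u n) in Hrec.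
    change (sumR (S (S n)) (zb_term u (S n))) with (sumR (S n) (zb_term u (S n)) + zb_term u (S n) (S n)).
    pose proof (zb_rec1_pos u n).
    apply Rmult_eq_reg_l with (zb_rec1 u n); [nra | lra].
Qed.

Definition inner_term (u n k : nat) : R :=
  2 * factR (2 * (n - k) + 1) * factR (2 * u + 2 * k)
  / (factR (n - k) ^ 2 * factR k * factR (2 * u + k + 1)).

Definition inner_dual (u n j : nat) : R :=
  kappa (u + j) * factR (2 * u + 2 * n + 3) / (factR (n - j) * factR (2 * u + n + j + 2)).

Lemma inner_term_0 u n : inner_term u n 0 = zb_term u n 0.
Proof.
  unfold inner_term, zb_term. replace (2 * u + 0 + 2)%nat with (S (2 * u + 0 + 1)) by lia.
  fact_field.
Qed.

Lemma inner_term_S u n k : (k <= n)%nat ->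
  inner_term u (S n) (S k) = zb_term u (S n) (S k) + inner_term (S u) n k.
Proof.
  intro Hk. unfold inner_term, zb_term. change (S n - S k)%nat with (n - k)%nat.
  replace (2 * S u + 2 * k)%nat with (2 * u + 2 * S k)%nat by lia.
  replace (2 * u + S k + 2)%nat with (S (2 * u + S k + 1)) by lia.
  replace (2 * S u + k + 1)%nat with (S (2 * u + S k + 1)) by lia.
  fact_field.
Qed.

Lemma inner_dual_0 u n : inner_dual u n 0 = zb_sum u n.
Proof. unfold inner_dual, zb_sum. now rewrite !Nat.add_0_r, Nat.sub_0_r. Qed.

Lemma inner_dual_S u n j : inner_dual u (S n) (S j) = inner_dual (S u) n j.
Proof.
  unfold inner_dual. change (S n - S j)%nat with (n - j)%nat.
  replace (u + S j)%nat with (S u + j)%nat by lia.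
  replace (2 * u + 2 * S n + 3)%nat with (2 * S u + 2 * n + 3)%nat by lia.
  now replace (2 * u + S n + S j + 2)%nat with (2 * S u + n + j + 2)%nat by lia.
Qed.

(* Peeling off [k = 0] and shifting [u] reduces the identity to [zb_term_sum]. *)
Lemma inner_term_sum n : forall u, sumR (S n) (inner_term u n) = sumR (S n) (inner_dual u n).
Proof.
  induction n as [|n IH]; intro u.
  - cbn [sumR]. rewrite inner_dual_0, inner_term_0, <- (zb_term_sum u 0). cbn [sumR]. ring.
  - rewrite (sumR_shift0 (S n) (inner_term u (S n))), (sumR_shift0 (S n) (inner_dual u (S n))).
    rewrite inner_dual_0, inner_term_0.
    rewrite (sumR_ext (S n) (fun k => inner_term u (S n) (S k)) (fun k => zb_term u (S n) (S k) + inner_term (S u) n k))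
      by (intros; apply inner_term_S; lia).
    rewrite (sumR_ext (S n) (fun j => inner_dual u (S n) (S j)) (inner_dual (S u) n)) by (intros; apply inner_dual_S).
    rewrite sumR_plus, <- IH, <- (zb_term_sum u (S n)), (sumR_shift0 (S n) (zb_term u (S n))).
    ring.
Qed.

(* [binom_ratio t v] is [C(2t, t+1+v) / C(2t, t)]. *)
Definition binom_ratio (t v : nat) : R := factR t ^ 2 / (factR (t - 1 - v) * factR (t + 1 + v)).

Definition even_coef (u : nat) : R := (alpha ^ 2) ^ u / factR (2 * u).
Definition cosh_partial (v : nat) : R := sumR (S v) even_coef.

Lemma rising_S_l a m : rising a (S m) = a * rising (a + 1) m.
Proof.
  revert a. induction m as [|m IH]; intro a; [simpl; ring|].
  change (rising a (S (S m))) with (rising a (S m) * (a + INR (S m))).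
  rewrite IH, S_INR. simpl. ring.
Qed.

Lemma rising_half s : rising (1 / 2 - INR s) (s + 1) = (-1) ^ s * factR (2 * s) / (2 * 4 ^ s * factR s).
Proof.
  induction s as [|s IH]; [simpl; unfold factR; simpl; field|].
  rewrite Nat.add_1_r, rising_S_l.
  replace (1 / 2 - INR (S s) + 1) with (1 / 2 - INR s) by (rewrite S_INR; ring).
  replace (rising (1 / 2 - INR s) (S s)) with (rising (1 / 2 - INR s) (s + 1))
    by now rewrite Nat.add_1_r.
  rewrite IH. replace (2 * S s)%nat with (S (S (2 * s))) by lia.
  simpl pow. fact_field.
Qed.

Lemma sign_rising_opp s u : (u <= s)%nat -> (-1) ^ u * rising (- INR s) u = factR s / factR (s - u).
Proof.
  induction u as [|u IH]; intro H; [simpl; rewrite Nat.sub_0_r; field; apply factR_neq0|].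
  replace ((-1) ^ S u * rising (- INR s) (S u)) with
    (((-1) ^ u * rising (- INR s) u) * (INR s - INR u)) by (simpl; ring).
  rewrite IH by lia.
  replace (s - u)%nat with (S (s - S u)) by lia.
  replace (INR s - INR u) with (INR (s - S u) + 1) by (rewrite minus_INR, S_INR by lia; ring).
  fact_field.
Qed.

Lemma gbinom_neg_three_halves m :
  gbinom (-3/2) m = (-1) ^ m * factR (2 * m + 1) / (4 ^ m * factR m ^ 2).
Proof.
  assert (Hfall : falling (-3/2) m = (-1) ^ m * factR (2 * m + 1) / (4 ^ m * factR m)).
  { induction m as [|m IH]; [simpl; unfold factR; simpl; field|].
    change (falling (-3/2) (S m)) with (falling (-3/2) m * (-3/2 - INR m)).
    rewrite IH. replace (2 * S m + 1)%nat with (S (S (2 * m + 1))) by lia.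
    simpl pow. fact_field. }
  unfold gbinom. rewrite Hfall. fold (factR m). fact_field.
Qed.

Definition S2_term (t s u : nat) : R :=
  rising (1 / 2 - INR s) (s + 1) * gbinom (-3/2) (t - s - 1) *
  ((-1) ^ u * rising (- INR s) u / (INR (fact (s + u + 1)) * INR (fact (2 * u))) * (PI ^ 2 / 36) ^ u).

Lemma S2_exchange t : S2 t = sumR t (fun u => sumR (t - u) (fun k => S2_term t (u + k)%nat u)).
Proof.
  unfold S2. rewrite <- (sumR_triangle t (S2_term t)).
  apply sumR_ext. intros s _. rewrite <- sumR_scal.
  replace (sumR (s + 1)) with (sumR (S s)) by now rewrite Nat.add_1_r. reflexivity.
Qed.

Lemma S2_term_closed u k j : S2_term (u + 1 + k + j) (u + k) u =
  (alpha ^ 2) ^ u * (-1) ^ (u + k + j) / (4 ^ (u + 1 + k + j) * factR (2 * u)) * inner_term u (k + j) k.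
Proof.
  unfold S2_term, inner_term.
  replace (PI ^ 2 / 36) with (alpha ^ 2) by (unfold alpha; field).
  rewrite rising_half, gbinom_neg_three_halves, sign_rising_opp by lia.
  replace (u + 1 + k + j - (u + k) - 1)%nat with j by lia.
  replace (u + k - u)%nat with k by lia. replace (k + j - k)%nat with j by lia.
  replace (u + k + u + 1)%nat with (2 * u + k + 1)%nat by lia.
  replace (2 * (u + k))%nat with (2 * u + 2 * k)%nat by lia.
  fold (factR (2 * u + k + 1)) (factR (2 * u)).
  rewrite !pow_add. fact_field.
Qed.

Lemma inner_dual_gbinom u n j : (j <= n)%nat ->
  (-1) ^ (u + n) / 4 ^ (u + 1 + n) * inner_dual u n j
  = - gbinom (-3/2) (u + 1 + n) * (kappa (u + j) * binom_ratio (u + 1 + n) (u + j)).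
Proof.
  intro H. destruct (Nat.le_exists_sub j n H) as [i [-> _]].
  unfold inner_dual, binom_ratio. rewrite gbinom_neg_three_halves.
  replace (i + j - j)%nat with i by lia.
  replace (u + 1 + (i + j) - 1 - (u + j))%nat with i by lia.
  replace (u + 1 + (i + j) + 1 + (u + j))%nat with (2 * u + (i + j) + j + 2)%nat by lia.
  replace (2 * (u + 1 + (i + j)) + 1)%nat with (2 * u + 2 * (i + j) + 3)%nat by lia.
  replace (u + 1 + (i + j))%nat with (S (u + (i + j))) by lia.
  simpl pow. fact_field.
Qed.

Lemma S2_closed t :
  S2 t = - gbinom (-3/2) t * sumR t (fun v => kappa v * binom_ratio t v * cosh_partial v).
Proof.
  rewrite S2_exchange, <- sumR_scal.
  transitivity (sumR t (fun u => sumR (t - u) (fun j =>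
    (- gbinom (-3/2) t * (kappa (u + j) * binom_ratio t (u + j))) * even_coef u))).
  - apply sumR_ext. intros u Hu.
    destruct (Nat.le_exists_sub (u + 1) t ltac:(lia)) as [n [-> _]].
    replace (n + (u + 1) - u)%nat with (S n) by lia.
    replace (n + (u + 1))%nat with (u + 1 + n)%nat by lia.
    rewrite (sumR_ext (S n) _ (fun k => (alpha ^ 2) ^ u * (-1) ^ (u + n)
              / (4 ^ (u + 1 + n) * factR (2 * u)) * inner_term u n k)).
    2: { intros k Hk. destruct (Nat.le_exists_sub k n ltac:(lia)) as [j [-> _]].
         replace (u + 1 + (j + k))%nat with (u + 1 + k + j)%nat by lia.
         replace (u + (j + k))%nat with (u + k + j)%nat by lia.
         rewrite Nat.add_comm with (n := j). apply S2_term_closed. }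
    rewrite sumR_scal, inner_term_sum, <- sumR_scal.
    apply sumR_ext. intros j Hj.
    rewrite <- inner_dual_gbinom by lia. unfold even_coef. fact_field.
  - rewrite <- (sumR_triangle t (fun v u => - gbinom (-3/2) t * (kappa v * binom_ratio t v) * even_coef u)).
    apply sumR_ext. intros v _. unfold cosh_partial.
    rewrite <- 2!sumR_scal. apply sumR_ext. intros. ring.
Qed.

Definition wallis_ratio (t : nat) : R := 4 ^ t * factR t ^ 2 / factR (2 * t + 1).

Lemma sign_div_gbinom t : (-1) ^ t / gbinom (-3/2) t = wallis_ratio t.
Proof.
  rewrite gbinom_neg_three_halves. unfold wallis_ratio.
  assert (H : (-1) ^ t * (-1) ^ t = 1) by (rewrite <- Rpow_mult_distr, <- (pow1 t); f_equal; ring).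
  field_simplify_eq; [lra|]. repeat split; try apply factR_neq0; apply pow_nonzero; lra.
Qed.

(* Certificate for [kappa_ratio_sum_rec]; at [v = t] its formula divides by zero, so the
   boundary value [kappa_ratio_cert_top] is used there. *)
Definition kappa_ratio_cert (t v : nat) : R :=
  - (INR t + 1) * (2 * INR v + 3) / (2 * INR (t - v)) * (kappa v * binom_ratio t v).

Definition kappa_ratio_cert_top (t : nat) : R :=
  - (INR t + 1) * (2 * INR t + 3) / 2 * kappa t * factR t ^ 2 / factR (2 * t + 1).

Lemma kappa_ratio_rec t v : (v < t)%nat ->
  (2 * INR (S t) + 3) * (kappa v * binom_ratio (S (S t)) v) - (2 * INR (S t) + 2) * (kappa v * binom_ratio (S t) v)
  = kappa_ratio_cert (S t) (S v) - kappa_ratio_cert (S t) v.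
Proof.
  intro Hv. destruct (Nat.le_exists_sub (S v) t Hv) as [m [-> _]].
  unfold kappa_ratio_cert, binom_ratio, kappa.
  replace (S (S (m + S v)) - 1 - v)%nat with (S (S m)) by lia.
  replace (S (m + S v) - 1 - v)%nat with (S m) by lia.
  replace (S (m + S v) - 1 - S v)%nat with m by lia.
  replace (S (m + S v) - S v)%nat with (S m) by lia.
  replace (S (m + S v) - v)%nat with (S (S m)) by lia.
  replace (S (S (m + S v)) + 1 + v)%nat with (S (S (m + S v) + 1 + v)) by lia.
  replace (S (m + S v) + 1 + S v)%nat with (S (S (m + S v) + 1 + v)) by lia.
  fact_field.
Qed.

Lemma kappa_ratio_rec_top t :
  (2 * INR (S t) + 3) * (kappa t * binom_ratio (S (S t)) t) - (2 * INR (S t) + 2) * (kappa t * binom_ratio (S t) t)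
  = kappa_ratio_cert_top (S t) - kappa_ratio_cert (S t) t.
Proof.
  unfold kappa_ratio_cert, kappa_ratio_cert_top, binom_ratio, kappa.
  replace (S (S t) - 1 - t)%nat with 1%nat by lia.
  replace (S t - 1 - t)%nat with 0%nat by lia.
  replace (S t - t)%nat with 1%nat by lia.
  replace (S (S t) + 1 + t)%nat with (S (S (2 * t + 1))) by lia.
  replace (S t + 1 + t)%nat with (S (2 * t + 1)) by lia.
  replace (2 * S t + 1)%nat with (S (S (2 * t + 1))) by lia.
  fact_field.
Qed.

Lemma kappa_ratio_cert_0 t : kappa_ratio_cert (S t) 0 = -1.
Proof.
  unfold kappa_ratio_cert, binom_ratio, kappa.
  replace (S t - 1 - 0)%nat with t by lia. rewrite Nat.sub_0_r.
  replace (S t + 1 + 0)%nat with (S (S t)) by lia.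
  fact_field.
Qed.

Lemma kappa_ratio_sum_rec t :
  (2 * INR (S t) + 3) * sumR (S (S t)) (fun v => kappa v * binom_ratio (S (S t)) v)
  = (2 * INR (S t) + 2) * sumR (S t) (fun v => kappa v * binom_ratio (S t) v) + 1.
Proof.
  assert (Hsum : sumR (S t) (fun v => (2 * INR (S t) + 3) * (kappa v * binom_ratio (S (S t)) v)
                                    + - (2 * INR (S t) + 2) * (kappa v * binom_ratio (S t) v))
                 = kappa_ratio_cert_top (S t) + 1).
  { replace (kappa_ratio_cert_top (S t) + 1)
      with (kappa_ratio_cert_top (S t) - kappa_ratio_cert (S t) 0) by (rewrite kappa_ratio_cert_0; ring).
    apply sumR_telescope.
    - intros v Hv. rewrite <- kappa_ratio_rec by exact Hv. ring.
    - rewrite <- kappa_ratio_rec_top. ring. }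
  assert (Htop : (2 * INR (S t) + 3) * (kappa (S t) * binom_ratio (S (S t)) (S t)) + kappa_ratio_cert_top (S t) = 0).
  { unfold kappa_ratio_cert_top, binom_ratio, kappa.
    replace (S (S t) - 1 - S t)%nat with 0%nat by lia.
    replace (S (S t) + 1 + S t)%nat with (S (2 * S t + 1)) by lia.
    fact_field. }
  rewrite sumR_lin in Hsum.
  change (sumR (S (S t)) (fun v => kappa v * binom_ratio (S (S t)) v))
    with (sumR (S t) (fun v => kappa v * binom_ratio (S (S t)) v) + kappa (S t) * binom_ratio (S (S t)) (S t)).
  lra.
Qed.

Lemma kappa_ratio_sum t : sumR t (fun v => kappa v * binom_ratio t v) = 1 - wallis_ratio t.
Proof.
  induction t as [|[|t] IH].
  - unfold wallis_ratio. simpl. unfold factR. simpl. field.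
  - unfold wallis_ratio, binom_ratio, kappa. cbn [sumR]. simpl (1 - 1 - 0)%nat. simpl (2 * 1 + 1)%nat.
    simpl (1 + 1 + 0)%nat. unfold factR. simpl. field.
  - pose proof (kappa_ratio_sum_rec t) as Hrec. rewrite IH in Hrec.
    assert (Hw : (2 * INR (S t) + 3) * wallis_ratio (S (S t)) = (2 * INR (S t) + 2) * wallis_ratio (S t)).
    { unfold wallis_ratio. replace (2 * S (S t) + 1)%nat with (S (S (2 * S t + 1))) by lia.
      simpl pow. fact_field. }
    assert (0 < 2 * INR (S t) + 3) by (nat_pos; lra).
    apply Rmult_eq_reg_l with (2 * INR (S t) + 3); lra.
Qed.

Lemma alpha_pos : 0 < alpha.
Proof. unfold alpha. generalize PI_RGT_0; lra. Qed.

Lemma alpha_sq_bound : 0 < alpha ^ 2 <= 4 / 9.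
Proof. unfold alpha. generalize PI_RGT_0 PI_4; intros; split; nra. Qed.

Lemma Un_cv_ext (u v : nat -> R) l : (forall n, u n = v n) -> Un_cv u l -> Un_cv v l.
Proof. intros E H eps He. destruct (H eps He) as [N HN]. exists N. intros n Hn. rewrite <- E. auto. Qed.

Lemma Un_cv_const c : Un_cv (fun _ => c) c.
Proof. intros eps He. exists 0%nat. intros. unfold Rdist. rewrite Rminus_diag, Rabs_R0. lra. Qed.

Lemma exp_series_cv x : Un_cv (sum_f_R0 (fun i => / INR (fact i) * x ^ i)) (exp x).
Proof. unfold exp. destruct (exist_exp x) as [l Hl]. exact Hl. Qed.

Definition cosh_coef (n : nat) : R := (alpha ^ n + (- alpha) ^ n) / (2 * factR n).
Definition sinh_coef (n : nat) : R := (alpha ^ n - (- alpha) ^ n) / (2 * factR n).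

Lemma cosh_series_cv : Un_cv (sum_f_R0 cosh_coef) (cosh alpha).
Proof.
  apply Un_cv_ext with (fun N => (sum_f_R0 (fun i => / INR (fact i) * alpha ^ i) N
                                 + sum_f_R0 (fun i => / INR (fact i) * (- alpha) ^ i) N) * / 2).
  - intro N. induction N as [|N IH]; cbn [sum_f_R0]; rewrite <- ?IH; unfold cosh_coef, factR;
      field; apply INR_fact_neq_0.
  - apply CV_mult; [apply CV_plus; apply exp_series_cv | apply Un_cv_const].
Qed.

Lemma sinh_series_cv : Un_cv (sum_f_R0 sinh_coef) (sinh alpha).
Proof.
  apply Un_cv_ext with (fun N => (sum_f_R0 (fun i => / INR (fact i) * alpha ^ i) N
                                 - sum_f_R0 (fun i => / INR (fact i) * (- alpha) ^ i) N) * / 2).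
  - intro N. induction N as [|N IH]; cbn [sum_f_R0]; rewrite <- ?IH; unfold sinh_coef, factR;
      field; apply INR_fact_neq_0.
  - apply CV_mult; [apply CV_minus; apply exp_series_cv | apply Un_cv_const].
Qed.

Lemma abs_pow_opp_alpha n : Rabs ((- alpha) ^ n) = alpha ^ n.
Proof. rewrite <- RPow_abs, Rabs_Ropp, Rabs_pos_eq; [reflexivity | generalize alpha_pos; lra]. Qed.

Lemma cosh_coef_nonneg n : 0 <= cosh_coef n.
Proof.
  unfold cosh_coef, Rdiv. apply Rmult_le_pos.
  - generalize (Rle_abs (- (- alpha) ^ n)). rewrite Rabs_Ropp, abs_pow_opp_alpha. lra.
  - apply Rlt_le, Rinv_0_lt_compat. generalize (factR_pos n). lra.
Qed.

Lemma sinh_coef_nonneg n : 0 <= sinh_coef n.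
Proof.
  unfold sinh_coef, Rdiv. apply Rmult_le_pos.
  - generalize (Rle_abs ((- alpha) ^ n)). rewrite abs_pow_opp_alpha. lra.
  - apply Rlt_le, Rinv_0_lt_compat. generalize (factR_pos n). lra.
Qed.

Lemma sinh_coef_S n : sinh_coef (S n) = alpha / (INR n + 1) * cosh_coef n.
Proof. unfold sinh_coef, cosh_coef. simpl pow. fact_field. Qed.

Lemma pow_opp_even k x : (- x) ^ (2 * k) = x ^ (2 * k).
Proof. rewrite !pow_mult. f_equal. ring. Qed.

Lemma pow_opp_odd k x : (- x) ^ (S (2 * k)) = - x ^ (S (2 * k)).
Proof. rewrite <- Nat.add_1_r, !pow_add, pow_opp_even. ring. Qed.

Lemma cosh_coef_shift_le j n : cosh_coef (n + 2 * S j) <= (alpha ^ 2) ^ S j / 2 * cosh_coef n.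
Proof.
  assert (Hfact : 2 * factR n <= factR (n + 2 * S j)).
  { apply Rle_trans with (factR (S (S n))).
    - rewrite factR_SS. nat_pos. generalize (factR_pos n). nra.
    - apply le_INR, fact_le. lia. }
  assert (HP : 0 <= alpha ^ n + (- alpha) ^ n).
  { generalize (Rle_abs (- (- alpha) ^ n)). rewrite Rabs_Ropp, abs_pow_opp_alpha. lra. }
  assert (HA : 0 < alpha ^ (2 * S j)) by apply (pow_lt _ _ alpha_pos).
  unfold cosh_coef. rewrite !pow_add, pow_opp_even, <- pow_mult.
  replace ((alpha ^ n * alpha ^ (2 * S j) + (- alpha) ^ n * alpha ^ (2 * S j)) / (2 * factR (n + 2 * S j)))
    with (alpha ^ (2 * S j) * (alpha ^ n + (- alpha) ^ n) * / (2 * factR (n + 2 * S j)))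
    by (field; apply factR_neq0).
  replace (alpha ^ (2 * S j) / 2 * ((alpha ^ n + (- alpha) ^ n) / (2 * factR n)))
    with (alpha ^ (2 * S j) * (alpha ^ n + (- alpha) ^ n) * / (2 * (2 * factR n)))
    by (field; apply factR_neq0).
  apply Rmult_le_compat_l; [nra|].
  apply Rinv_le_contravar; generalize (factR_pos n); lra.
Qed.

Definition sinhc_partial (t : nat) : R := sumR t (fun u => even_coef u / (2 * INR u + 1)).

Lemma cosh_coef_partial v : sum_f_R0 cosh_coef (S (2 * v)) = cosh_partial v.
Proof.
  induction v as [|v IH]; [unfold cosh_partial, even_coef, cosh_coef; simpl; unfold factR; simpl; field|].
  replace (S (2 * S v)) with (S (S (S (2 * v)))) by lia.
  change (sum_f_R0 cosh_coef (S (S (S (2 * v))))) with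
    (sum_f_R0 cosh_coef (S (2 * v)) + cosh_coef (S (S (2 * v))) + cosh_coef (S (S (S (2 * v))))).
  rewrite IH.
  unfold cosh_partial. change (sumR (S (S v)) even_coef) with (sumR (S v) even_coef + even_coef (S v)).
  replace (S (S (2 * v))) with (2 * S v)%nat by lia.
  unfold cosh_coef, even_coef. rewrite pow_opp_odd, pow_opp_even, <- pow_mult.
  field. split; apply factR_neq0.
Qed.

Lemma sinh_coef_partial t : sum_f_R0 sinh_coef (2 * t) = alpha * sinhc_partial t.
Proof.
  induction t as [|t IH]; [unfold sinh_coef, sinhc_partial; simpl; unfold factR; simpl; field|].
  replace (2 * S t)%nat with (S (S (2 * t))) by lia.
  change (sum_f_R0 sinh_coef (S (S (2 * t)))) with
    (sum_f_R0 sinh_coef (2 * t) + sinh_coef (S (2 * t)) + sinh_coef (S (S (2 * t)))).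
  rewrite IH.
  unfold sinhc_partial. cbn [sumR].
  replace (S (S (2 * t))) with (2 * S t)%nat by lia.
  unfold sinh_coef, even_coef. rewrite pow_opp_odd, pow_opp_even, factR_S, <- pow_mult.
  replace (INR (2 * t)) with (2 * INR t) by (rewrite mult_INR; reflexivity).
  simpl pow. fact_field.
Qed.

Lemma sum_f_R0_split f k N : sum_f_R0 f (N + S k) = sum_f_R0 f k + sum_f_R0 (fun n => f (n + S k)%nat) N.
Proof.
  induction N as [|N IH]; [reflexivity|].
  change (S N + S k)%nat with (S (N + S k)). rewrite !tech5, IH, Rplus_assoc. reflexivity.
Qed.

Lemma even_coef_nonneg u : 0 <= even_coef u.
Proof.
  unfold even_coef, Rdiv. apply Rmult_le_pos; [apply pow_le, pow2_ge_0|].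
  apply Rlt_le, Rinv_0_lt_compat, factR_pos.
Qed.

Lemma cosh_partial_ge_1 v : 1 <= cosh_partial v.
Proof.
  unfold cosh_partial. rewrite sumR_shift0.
  replace (even_coef 0) with 1 by (unfold even_coef; simpl; unfold factR; simpl; field).
  generalize (sumR_nonneg v (fun k => even_coef (S k)) (fun k _ => even_coef_nonneg (S k))). lra.
Qed.

Lemma cosh_partial_le v : cosh_partial v <= cosh alpha.
Proof.
  rewrite <- cosh_coef_partial. apply growing_ineq; [|apply cosh_series_cv].
  intro n. cbn [sum_f_R0]. generalize (cosh_coef_nonneg (S n)). lra.
Qed.

Lemma sinhc_partial_le t : alpha * sinhc_partial t <= sinh alpha.
Proof.
  rewrite <- sinh_coef_partial. apply growing_ineq; [|apply sinh_series_cv].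
  intro n. cbn [sum_f_R0]. generalize (sinh_coef_nonneg (S n)). lra.
Qed.

Lemma cosh_tail_le v : cosh alpha - cosh_partial v <= (alpha ^ 2) ^ S v / 2 * cosh alpha.
Proof.
  apply Rle_cv_lim with (fun N => sum_f_R0 cosh_coef (N + S (S (2 * v))) - cosh_partial v)
                        (fun N => (alpha ^ 2) ^ S v / 2 * sum_f_R0 cosh_coef N).
  - intro N. rewrite sum_f_R0_split, cosh_coef_partial, scal_sum.
    replace (cosh_partial v + _ - cosh_partial v) with
      (sum_f_R0 (fun n => cosh_coef (n + S (S (2 * v)))) N) by ring.
    apply sum_Rle. intros n _. rewrite Rmult_comm.
    replace (n + S (S (2 * v)))%nat with (n + 2 * S v)%nat by lia. apply cosh_coef_shift_le.
  - apply CV_minus; [apply CV_shift', cosh_series_cv | apply Un_cv_const].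
  - apply CV_mult; [apply Un_cv_const | apply cosh_series_cv].
Qed.

Lemma sinh_tail_le t :
  sinh alpha - alpha * sinhc_partial (S t) <= alpha / (2 * INR t + 3) * (cosh alpha - cosh_partial t).
Proof.
  rewrite <- sinh_coef_partial, <- cosh_coef_partial.
  replace (2 * S t)%nat with (S (S (2 * t))) by lia.
  set (m := S (S (2 * t))).
  apply Rle_cv_lim with (fun N => sum_f_R0 sinh_coef (N + S m) - sum_f_R0 sinh_coef m)
    (fun N => alpha / (2 * INR t + 3) * (sum_f_R0 cosh_coef (N + m) - sum_f_R0 cosh_coef (S (2 * t)))).
  - intro N. unfold m at 3. rewrite (sum_f_R0_split sinh_coef), (sum_f_R0_split cosh_coef).
    replace (sum_f_R0 sinh_coef m + _ - sum_f_R0 sinh_coef m)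
      with (sum_f_R0 (fun n => sinh_coef (n + S m)) N) by ring.
    replace (sum_f_R0 cosh_coef (S (2 * t)) + _ - sum_f_R0 cosh_coef (S (2 * t)))
      with (sum_f_R0 (fun n => cosh_coef (n + S (S (2 * t)))) N) by ring.
    rewrite scal_sum. apply sum_Rle. intros n _. fold m.
    replace (n + S m)%nat with (S (n + m)) by lia.
    rewrite sinh_coef_S, (Rmult_comm (cosh_coef _)).
    apply Rmult_le_compat_r; [apply cosh_coef_nonneg|].
    unfold Rdiv. apply Rmult_le_compat_l; [generalize alpha_pos; lra|].
    apply Rinv_le_contravar; unfold m; nat_pos; inr_simpl; lra.
  - apply CV_minus; [apply CV_shift', sinh_series_cv | apply Un_cv_const].
  - apply CV_mult; [apply Un_cv_const|].
    apply CV_minus; [apply CV_shift', cosh_series_cv | apply Un_cv_const].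
Qed.

Lemma kappa_nonneg v : 0 <= kappa v.
Proof.
  unfold kappa, Rdiv. nat_pos. apply Rmult_le_pos; [lra|]. apply Rlt_le, Rinv_0_lt_compat. nra.
Qed.

Lemma kappa_sum N : sumR N kappa = 1 - 1 / (2 * INR N + 1).
Proof.
  induction N as [|N IH]; cbn [sumR]; [simpl; field|].
  rewrite IH. unfold kappa. fact_field.
Qed.

Lemma kappa_cosh_partial_sum N :
  sumR N (fun v => kappa v * cosh_partial v) = sinhc_partial N - sumR N even_coef / (2 * INR N + 1).
Proof.
  induction N as [|N IH]; [unfold sinhc_partial; simpl; field|].
  change (sumR (S N) (fun v => kappa v * cosh_partial v))
    with (sumR N (fun v => kappa v * cosh_partial v) + kappa N * cosh_partial N).
  rewrite IH. unfold sinhc_partial, cosh_partial. cbn [sumR]. unfold kappa. fact_field.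
Qed.

Lemma sumR_defect_expand N (k w a : nat -> R) c :
  sumR N (fun v => k v * (1 - w v) * (c - a v)) =
  c * sumR N k - sumR N (fun v => k v * a v)
  - c * sumR N (fun v => k v * w v) + sumR N (fun v => k v * w v * a v).
Proof. induction N as [|N IH]; simpl; [ring|rewrite IH; ring]. Qed.

Definition defect_sum (t : nat) : R :=
  sumR t (fun v => kappa v * (1 - binom_ratio t v) * (cosh alpha - cosh_partial v)).

Lemma error_decomposition n : let t := S n in
  S2 t / gbinom (-3/2) t - (-1) ^ t / gbinom (-3/2) t * cosh alpha + sinh alpha / alpha
  = (sinh alpha / alpha - sinhc_partial t) - (cosh alpha - cosh_partial n) / (2 * INR t + 1)
    - defect_sum t.
Proof.
  intro t.
  assert (Hgb : gbinom (-3/2) t <> 0).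
  { rewrite gbinom_neg_three_halves. unfold Rdiv.
    repeat apply Rmult_integral_contrapositive_currified;
      try apply Rinv_neq_0_compat; try apply Rmult_integral_contrapositive_currified;
      try apply pow_nonzero; try apply factR_neq0; lra. }
  rewrite S2_closed, sign_div_gbinom.
  replace (wallis_ratio t) with (1 - sumR t (fun v => kappa v * binom_ratio t v))
    by (rewrite kappa_ratio_sum; ring).
  unfold defect_sum. rewrite sumR_defect_expand, kappa_sum, kappa_cosh_partial_sum.
  change (sumR t even_coef) with (cosh_partial n).
  generalize alpha_pos; intro. field. repeat split; [nat_pos; lra | lra | exact Hgb].
Qed.

Lemma binom_ratio_0 n : binom_ratio (S n) 0 = 1 - 1 / (INR n + 2).
Proof.
  unfold binom_ratio. replace (S n - 1 - 0)%nat with n by lia.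
  replace (S n + 1 + 0)%nat with (S (S n)) by lia. fact_field.
Qed.

Lemma binom_ratio_S t v : (S v < t)%nat ->
  binom_ratio t (S v) = binom_ratio t v * (1 - (2 * INR v + 3) / (INR t + INR v + 2)).
Proof.
  intro Hv. destruct (Nat.le_exists_sub (S (S v)) t Hv) as [m [-> _]].
  unfold binom_ratio.
  replace (m + S (S v) - 1 - S v)%nat with m by lia.
  replace (m + S (S v) - 1 - v)%nat with (S m) by lia.
  replace (m + S (S v) + 1 + S v)%nat with (S (m + S (S v) + 1 + v)) by lia.
  fact_field.
Qed.

(* [binom_ratio t v] is a product of [v + 1] factors [1 - x_i] with [0 <= x_i <= (2i+1)/t]. *)
Lemma binom_ratio_bounds t v : (v < t)%nat ->
  0 <= binom_ratio t v <= 1 /\ 1 - binom_ratio t v <= (INR v + 1) ^ 2 / INR t.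
Proof.
  induction v as [|v IH]; intro Hv.
  - destruct t as [|n]; [lia|]. rewrite binom_ratio_0, S_INR, INR_0. nat_pos.
    assert (0 < 1 / (INR n + 2) <= 1 / (INR n + 1)).
    { split; [apply Rdiv_lt_0_compat; lra|].
      unfold Rdiv. apply Rmult_le_compat_l; [lra|]. apply Rinv_le_contravar; lra. }
    assert (1 / (INR n + 1) <= 1).
    { unfold Rdiv. rewrite Rmult_1_l, <- Rinv_1. apply Rinv_le_contravar; lra. }
    replace ((0 + 1) ^ 2 / (INR n + 1)) with (1 / (INR n + 1)) by (field; lra).
    lra.
  - destruct (IH ltac:(lia)) as [[W0 W1] Wd].
    rewrite binom_ratio_S by lia.
    set (x := (2 * INR v + 3) / (INR t + INR v + 2)).
    assert (Ht : INR v + 2 <= INR t) by (replace 2 with (INR 2) by reflexivity;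
                                         rewrite <- plus_INR; apply le_INR; lia).
    nat_pos.
    assert (Hx : 0 <= x <= 1 /\ x <= (2 * INR v + 3) / INR t).
    { unfold x, Rdiv. split; [split|].
      - apply Rmult_le_pos; [lra|]. apply Rlt_le, Rinv_0_lt_compat; lra.
      - apply Rmult_le_reg_r with (INR t + INR v + 2); [lra|].
        rewrite Rmult_assoc, Rinv_l; lra.
      - apply Rmult_le_compat_l; [lra|]. apply Rinv_le_contravar; lra. }
    replace ((INR (S v) + 1) ^ 2 / INR t) with ((INR v + 1) ^ 2 / INR t + (2 * INR v + 3) / INR t)
      by (rewrite S_INR; field; lra).
    split; [split|]; nra.
Qed.

Lemma cosh_alpha_bounds : 1 <= cosh alpha <= 9 / 7.
Proof.
  pose proof (cosh_partial_ge_1 0). pose proof (cosh_partial_le 0).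
  pose proof (cosh_tail_le 0). pose proof alpha_sq_bound.
  replace (cosh_partial 0) with 1 in *
    by (unfold cosh_partial, even_coef; simpl; unfold factR; simpl; field).
  simpl pow in *. nra.
Qed.

Lemma kappa_mul_sq_le v : kappa v * (INR v + 1) ^ 2 <= 2 / 3.
Proof.
  unfold kappa. nat_pos.
  apply Rmult_le_reg_r with ((2 * INR v + 1) * (2 * INR v + 3)); [nra|].
  replace (2 / ((2 * INR v + 1) * (2 * INR v + 3)) * (INR v + 1) ^ 2 * ((2 * INR v + 1) * (2 * INR v + 3)))
    with (2 * (INR v + 1) ^ 2) by (field; nra).
  nra.
Qed.

Lemma alpha_sq_geometric_le N : sumR N (fun v => (alpha ^ 2) ^ S v) <= 4 / 5.
Proof.
  destruct alpha_sq_bound as [Hz1 Hz2].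
  assert (Hgeo : sumR N (fun v => (alpha ^ 2) ^ S v) * (1 - alpha ^ 2) = alpha ^ 2 - (alpha ^ 2) ^ S N).
  { induction N as [|N IH]; [simpl; ring|]. cbn [sumR]. rewrite Rmult_plus_distr_r, IH. simpl. ring. }
  assert (0 <= sumR N (fun v => (alpha ^ 2) ^ S v)) by (apply sumR_nonneg; intros; apply pow_le; lra).
  assert (0 < (alpha ^ 2) ^ S N) by (apply pow_lt; lra).
  nra.
Qed.

Lemma sinhc_gap_bounds n :
  0 <= sinh alpha / alpha - sinhc_partial (S n)
  <= (cosh alpha - cosh_partial n) / (2 * INR (S n) + 1).
Proof.
  pose proof alpha_pos. pose proof (sinhc_partial_le (S n)). pose proof (sinh_tail_le n).
  replace (sinh alpha / alpha - sinhc_partial (S n))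
    with ((sinh alpha - alpha * sinhc_partial (S n)) / alpha) by (field; lra).
  replace ((cosh alpha - cosh_partial n) / (2 * INR (S n) + 1))
    with (alpha / (2 * INR n + 3) * (cosh alpha - cosh_partial n) / alpha)
    by (rewrite S_INR; nat_pos; field; lra).
  unfold Rdiv at 1 3. split.
  - apply Rmult_le_pos; [lra | apply Rlt_le, Rinv_0_lt_compat; lra].
  - apply Rmult_le_compat_r; [apply Rlt_le, Rinv_0_lt_compat; lra | lra].
Qed.

Lemma cosh_gap_le n : (cosh alpha - cosh_partial n) / (2 * INR (S n) + 1) <= 2 / 7 / INR (S n).
Proof.
  pose proof cosh_alpha_bounds. pose proof (cosh_partial_ge_1 n). pose proof (cosh_partial_le n).
  assert (HT : 1 <= INR (S n)) by (rewrite S_INR; nat_pos; lra).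
  apply Rle_trans with ((cosh alpha - cosh_partial n) / INR (S n)); unfold Rdiv.
  - apply Rmult_le_compat_l; [lra|]. apply Rinv_le_contravar; lra.
  - apply Rmult_le_compat_r; [apply Rlt_le, Rinv_0_lt_compat | ]; lra.
Qed.

(* Each summand is at most [kappa v (v+1)^2 / t * (alpha^2)^(v+1)/2 * cosh alpha], and
   [kappa v (v+1)^2 <= 2/3] leaves a geometric series. *)
Lemma defect_sum_bounds t : (1 <= t)%nat -> 0 <= defect_sum t <= 12 / 35 / INR t.
Proof.
  intro Ht. pose proof cosh_alpha_bounds. pose proof alpha_sq_bound.
  assert (HT : 1 <= INR t) by (apply (le_INR 1); exact Ht).
  assert (Hterm : forall v, (v < t)%nat ->
    0 <= kappa v * (1 - binom_ratio t v) * (cosh alpha - cosh_partial v)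
    <= cosh alpha / (3 * INR t) * (alpha ^ 2) ^ S v).
  { intros v Hv.
    destruct (binom_ratio_bounds t v Hv) as [[W0 W1] Wd].
    pose proof (kappa_nonneg v). pose proof (cosh_partial_le v). pose proof (cosh_tail_le v).
    assert (Hkw : kappa v * (1 - binom_ratio t v) <= 2 / 3 / INR t).
    { apply Rle_trans with (kappa v * (INR v + 1) ^ 2 / INR t).
      - unfold Rdiv. rewrite Rmult_assoc. apply Rmult_le_compat_l; lra.
      - unfold Rdiv. apply Rmult_le_compat_r; [apply Rlt_le, Rinv_0_lt_compat; lra|].
        apply kappa_mul_sq_le. }
    replace (cosh alpha / (3 * INR t) * (alpha ^ 2) ^ S v)
      with (2 / 3 / INR t * ((alpha ^ 2) ^ S v / 2 * cosh alpha)) by (field; lra).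
    split; [apply Rmult_le_pos; [apply Rmult_le_pos|]; lra|].
    apply Rmult_le_compat; try lra. apply Rmult_le_pos; lra. }
  split; [apply sumR_nonneg; intros v Hv; apply Hterm, Hv|].
  apply Rle_trans with (cosh alpha / (3 * INR t) * sumR t (fun v => (alpha ^ 2) ^ S v)).
  - rewrite <- sumR_scal. apply sumR_le. intros v Hv. apply Hterm, Hv.
  - pose proof (alpha_sq_geometric_le t).
    assert (0 <= sumR t (fun v => (alpha ^ 2) ^ S v)) by (apply sumR_nonneg; intros; apply pow_le; lra).
    replace (12 / 35 / INR t) with (9 / 7 / (3 * INR t) * (4 / 5)) by (field; lra).
    apply Rmult_le_compat; try lra.
    + unfold Rdiv. apply Rmult_le_pos; [lra | apply Rlt_le, Rinv_0_lt_compat; lra].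
    + unfold Rdiv. apply Rmult_le_compat_r; [apply Rlt_le, Rinv_0_lt_compat|]; lra.
Qed.

Theorem mainTheorem11 : forall t : nat, (1 <= t)%nat ->
  - (11 / (10 * INR t)) <
    S2 t / gbinom (-3/2) t - (-1) ^ t / gbinom (-3/2) t * cosh alpha
      + sinh alpha / alpha
  /\
  S2 t / gbinom (-3/2) t - (-1) ^ t / gbinom (-3/2) t * cosh alpha
      + sinh alpha / alpha < 1 / INR t.
Proof.
  intros t Ht. destruct t as [|n]; [lia|].
  rewrite error_decomposition.
  pose proof (sinhc_gap_bounds n). pose proof (cosh_gap_le n).
  pose proof (defect_sum_bounds (S n) Ht).
  assert (Hinv : 0 < 1 / INR (S n)) by (apply Rdiv_lt_0_compat; [lra | apply lt_0_INR; lia]).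
  replace (11 / (10 * INR (S n))) with (11 / 10 * (1 / INR (S n))) by (field; apply not_0_INR; lia).
  replace (2 / 7 / INR (S n)) with (2 / 7 * (1 / INR (S n))) in * by (field; apply not_0_INR; lia).
  replace (12 / 35 / INR (S n)) with (12 / 35 * (1 / INR (S n))) in * by (field; apply not_0_INR; lia).
  split; lra.
Qed.
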